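(* Let $H$ be a complex Hilbert space, $\varphi,\psi:[0,1]\to\mathbb{R}$ continuous, $A\in\mathbb{B}(H)$ and $t\in[0,1]$. Then $$\omega_t^2(\varphi,\psi;A)\le|\varphi(t)|^2\omega^2(A)+|\varphi(t)\psi(t)|\,\omega(A^2)+\frac{|\varphi(t)|+|\psi(t)|}{2}\,|\psi(t)|\,\|A^*A+AA^*\|.$$
   Context: $S_1(H)$ is the unit sphere of $H$, $\omega(T)=\sup_{x\in S_1(H)}|\langle Tx,x\rangle|$, and $\omega_t(\varphi,\psi;A)=\sup_{x\in S_1(H)}|\langle(\varphi(t)A+\psi(t)A^* )x,x\rangle|$. *)

From HB Require Import structures.
From mathcomp Require Import all_boot all_order all_algebra.
From mathcomp Require Import complex.
From mathcomp Require Import boolp classical_sets set_interval reals topology normedtype.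
Set Implicit Arguments. Unset Strict Implicit. Unset Printing Implicit Defensive.
Import Order.TTheory GRing.Theory Num.Theory numFieldNormedType.Exports.
Local Open Scope ring_scope.
Local Open Scope classical_set_scope.

Definition cabs (R : realType) (z : R[i]) : R :=
  Num.sqrt (complex.Re z ^+ 2 + complex.Im z ^+ 2).

Definition hnorm (R : realType) (V : lmodType R[i]) (ip : V -> V -> R[i]) (x : V) : R :=
  Num.sqrt (complex.Re (ip x x)).

Definition is_inner_product (R : realType) (V : lmodType R[i]) (ip : V -> V -> R[i]) : Prop :=
  [/\ (forall (a : R[i]) (x y z : V), ip (a *: x + y) z = a * ip x z + ip y z),
      (forall x y : V, ip y x = Num.conj (ip x y)),
      (forall x : V, 0 <= ip x x) &
      (forall x : V, ip x x = 0 -> x = 0)].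

Definition is_complete (R : realType) (V : lmodType R[i]) (ip : V -> V -> R[i]) : Prop :=
  forall u : nat -> V,
    (forall e : R, 0 < e -> exists N : nat, forall m n : nat, (N <= m)%N -> (N <= n)%N ->
        hnorm ip (u m - u n) < e) ->
    exists l : V, forall e : R, 0 < e -> exists N : nat, forall n : nat, (N <= n)%N ->
        hnorm ip (u n - l) < e.

Definition is_hilbert (R : realType) (V : lmodType R[i]) (ip : V -> V -> R[i]) : Prop :=
  is_inner_product ip /\ is_complete ip.

Definition unit_sphere (R : realType) (V : lmodType R[i]) (ip : V -> V -> R[i]) : set V :=
  [set x | hnorm ip x = 1].

Definition is_bounded_op (R : realType) (V : lmodType R[i]) (ip : V -> V -> R[i])
  (T : V -> V) : Prop :=
  linear T /\ exists M : R, forall x : V, hnorm ip (T x) <= M * hnorm ip x.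

Definition is_adjoint (R : realType) (V : lmodType R[i]) (ip : V -> V -> R[i])
  (T Ts : V -> V) : Prop :=
  forall x y : V, ip (T x) y = ip x (Ts y).

Definition numrad (R : realType) (V : lmodType R[i]) (ip : V -> V -> R[i]) (T : V -> V) : R :=
  sup [set cabs (ip (T x) x) | x in unit_sphere ip].

Definition opnorm (R : realType) (V : lmodType R[i]) (ip : V -> V -> R[i]) (T : V -> V) : R :=
  sup [set hnorm ip (T x) | x in unit_sphere ip].

Definition numrad_t (R : realType) (V : lmodType R[i]) (ip : V -> V -> R[i])
  (phi psi : R -> R) (A As : V -> V) (t : R) : R :=
  numrad ip (fun x => ((phi t)%:C)%C *: A x + ((psi t)%:C)%C *: As x).

From HB Require Import structures.
From mathcomp Require Import all_boot all_order all_algebra.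
From mathcomp Require Import complex.
From mathcomp Require Import boolp classical_sets set_interval reals topology normedtype.
From mathcomp Require Import ring lra.
Import Order.TTheory GRing.Theory Num.Theory numFieldNormedType.Exports.
Local Open Scope ring_scope.
Local Open Scope classical_set_scope.

(* For a unit vector x put z = <Ax, x>.  Since <A^* x, x> is the conjugate of z,
   |<(a A + b A^* ) x, x>| <= (|a| + |b|) |z|, and the square of the right-hand side
   splits as a^2 |z|^2 + |ab| 2|z|^2 + b^2 |z|^2.  Bound the first term by a^2 w(A)^2;
   the second by Buzano's inequality, 2|<Ax, x><x, A^* x>| <= |<A^2 x, x>| + |Ax||A^* x|;
   the third by Cauchy-Schwarz, |z|^2 <= |Ax||A^* x|; finally
   2|Ax||A^* x| <= |Ax|^2 + |A^* x|^2 = Re <(A^* A + A A^* ) x, x> <= |A^* A + A A^*|. *)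

Set Implicit Arguments.
Unset Strict Implicit.
Unset Printing Implicit Defensive.

Section ComplexModulus.
Variable R : realType.
Implicit Types (z w : R[i]) (a : R).

Lemma cabsE z : ((cabs z)%:C)%C = `|z|.
Proof. by rewrite normc_def. Qed.

Lemma cabs_ge0 z : 0 <= cabs z.
Proof. exact: sqrtr_ge0. Qed.

Lemma cabsM z w : cabs (z * w) = cabs z * cabs w.
Proof. by apply: (@complexI R); rewrite rmorphM /= !cabsE normrM. Qed.

Lemma cabsD z w : cabs (z + w) <= cabs z + cabs w.
Proof. by rewrite -lecR rmorphD /= !cabsE ler_normD. Qed.

Lemma cabs_conj z : cabs (Num.conj z) = cabs z.
Proof. by case: z => p q; rewrite /cabs /= sqrrN. Qed.

Lemma cabs_real a : cabs ((a%:C)%C : R[i]) = `|a|.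
Proof. by rewrite /cabs /= expr0n /= addr0 sqrtr_sqr. Qed.

Lemma conj_real a : Num.conj ((a%:C)%C : R[i]) = (a%:C)%C.
Proof. exact: conjc_real. Qed.

Lemma Re_le_cabs z : complex.Re z <= cabs z.
Proof. by apply: le_trans (ler_norm _) _; rewrite -lecR cabsE normc_ge_Re. Qed.

End ComplexModulus.

Section InnerProduct.
Variables (R : realType) (V : lmodType R[i]) (ip : V -> V -> R[i]).
Hypothesis ip_inner : is_inner_product ip.
Implicit Types (x y z : V) (a : R[i]).

Lemma ip0l z : ip 0 z = 0.
Proof.
have [lin _ _ _] := ip_inner.
have := lin 1 0 0 z; rewrite scaler0 addr0 mul1r => h.
by apply: (addrI (ip 0 z)); rewrite addr0 -h.
Qed.

Lemma ipZl a x z : ip (a *: x) z = a * ip x z.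
Proof. by have [lin _ _ _] := ip_inner; rewrite -[a *: x]addr0 lin ip0l addr0. Qed.

Lemma ipDl x y z : ip (x + y) z = ip x z + ip y z.
Proof. by have [lin _ _ _] := ip_inner; have := lin 1 x y z; rewrite scale1r mul1r. Qed.

Lemma ipBl x y z : ip (x - y) z = ip x z - ip y z.
Proof. by rewrite -scaleN1r ipDl ipZl mulN1r. Qed.

Lemma ipC x y : ip y x = Num.conj (ip x y).
Proof. by case: ip_inner. Qed.

Lemma ipZr a x z : ip x (a *: z) = Num.conj a * ip x z.
Proof. by rewrite ipC ipZl rmorphM /= -ipC. Qed.

Lemma ipDr x y z : ip z (x + y) = ip z x + ip z y.
Proof. by rewrite ipC ipDl rmorphD /= -!ipC. Qed.

Lemma ipBr x y z : ip z (x - y) = ip z x - ip z y.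
Proof. by rewrite ipC ipBl rmorphB /= -!ipC. Qed.

Lemma ip0r z : ip z 0 = 0.
Proof. by rewrite ipC ip0l rmorph0. Qed.

Lemma ipxx x : ip x x = ((hnorm ip x ^+ 2)%:C)%C.
Proof.
have [_ _ ip_ge0 _] := ip_inner; move: (ip_ge0 x); rewrite /hnorm.
by case: (ip x x) => p q; rewrite lecE /= => /andP[/eqP -> p0]; rewrite sqr_sqrtr.
Qed.

Lemma hnorm_ge0 x : 0 <= hnorm ip x.
Proof. exact: sqrtr_ge0. Qed.

Lemma hnorm_eq0 x : hnorm ip x = 0 -> x = 0.
Proof.
by have [_ _ _ ip_eq0] := ip_inner; move=> x0; apply: ip_eq0; rewrite ipxx x0 expr0n.
Qed.

Lemma cauchy_schwarz x y : cabs (ip x y) <= hnorm ip x * hnorm ip y.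
Proof.
have [/hnorm_eq0 ->|y_neq0] := eqVneq (hnorm ip y) 0.
  by rewrite ip0r /cabs /= expr0n addr0 sqrtr0 mulr_ge0 ?hnorm_ge0.
(* <w, w> = <y, y> (<y, y> <x, x> - |<x, y>|^2) >= 0 *)
pose w := ip y y *: x - ip x y *: y.
have ip_ww : ip w w = ((hnorm ip y ^+ 2 *
    (hnorm ip y ^+ 2 * hnorm ip x ^+ 2 - cabs (ip x y) ^+ 2))%:C)%C.
  rewrite /w ipBl !ipZl !ipBr !ipZr (ipC x y) !ipxx conj_real.
  rewrite !(rmorphM, rmorphB, rmorphXn) /= cabsE -[`|ip x y| * _]expr2 normCK.
  ring.
have [_ _ ip_ge0 _] := ip_inner.
have hy_gt0 : 0 < hnorm ip y ^+ 2 by rewrite exprn_gt0 // lt_def y_neq0 hnorm_ge0.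
have := ip_ge0 w; rewrite ip_ww ler0c pmulr_rge0 // subr_ge0 -exprMn mulrC.
by rewrite ler_pXn2r ?nnegrE ?cabs_ge0 ?mulr_ge0 ?hnorm_ge0.
Qed.

Lemma hnormD x y : hnorm ip (x + y) <= hnorm ip x + hnorm ip y.
Proof.
have Re_ipxx z : complex.Re (ip z z) = hnorm ip z ^+ 2 by rewrite ipxx.
have expand : hnorm ip (x + y) ^+ 2 =
    hnorm ip x ^+ 2 + hnorm ip y ^+ 2 + 2 * complex.Re (ip x y).
  rewrite -!Re_ipxx ipDl !ipDr (ipC x y).
  by case: (ip x x) (ip x y) (ip y y) => [? ?] [? ?] [? ?] /=; ring.
rewrite -(ler_pXn2r (n := 2)) ?nnegrE ?addr_ge0 ?hnorm_ge0 // expand.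
have := Re_le_cabs (ip x y); have := cauchy_schwarz x y; lra.
Qed.

Lemma buzano x y e : hnorm ip e = 1 ->
  2 * cabs (ip x e * ip e y) <= cabs (ip x y) + hnorm ip x * hnorm ip y.
Proof.
move=> e1; have ip_ee : ip e e = 1 by rewrite ipxx e1 expr1n.
(* The reflection of x in the line through e has the norm of x. *)
pose x' := (2 * ip x e) *: e - x.
have hnorm_x' : hnorm ip x' = hnorm ip x.
  rewrite /hnorm /x' ipBl !ipZl !ipBr !ipZr ip_ee (ipC x e) rmorphM rmorph_nat.
  by congr (Num.sqrt (complex.Re _)); ring.
have cabs2 : cabs (2 : R[i]) = 2.
  by rewrite -(rmorph_nat (real_complex R)) cabs_real normr_nat.
rewrite -cabs2 -cabsM.
have -> : 2 * (ip x e * ip e y) = ip x' y + ip x y by rewrite /x' ipBl ipZl; ring.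
apply: le_trans (cabsD _ _) _; rewrite addrC lerD2l -hnorm_x'.
exact: cauchy_schwarz.
Qed.

End InnerProduct.

Section SupImage.
Variables (R : realType) (T : Type) (f : T -> R) (S : set T).

Lemma sup_image_ge0 : (forall x, 0 <= f x) -> 0 <= sup (f @` S).
Proof.
move=> f_ge0; have [[[_ [x Sx _]] ub]|no_sup] := pselect (has_sup (f @` S)).
  by apply: le_trans (f_ge0 x) _; apply: ub_le_sup ub _ _; exists x.
by rewrite sup_out.
Qed.

Lemma sup_image_ub B x : (forall y, S y -> f y <= B) -> S x -> f x <= sup (f @` S).
Proof.
by move=> f_le Sx; apply: ub_le_sup; [exists B => _ [y Sy <-]; apply: f_le | exists x].
Qed.

Lemma sup_image_sqr_le B : 0 <= B -> (forall x, 0 <= f x) ->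
  (forall x, S x -> f x ^+ 2 <= B) -> sup (f @` S) ^+ 2 <= B.
Proof.
move=> B_ge0 f_ge0 f_le; rewrite -(sqr_sqrtr B_ge0).
rewrite ler_pXn2r ?nnegrE ?sup_image_ge0 ?sqrtr_ge0 //.
have [[_ [x Sx _]]|empty] := pselect (f @` S !=set0); last first.
  rewrite (_ : f @` S = set0) ?sup0 ?sqrtr_ge0 //.
  by apply/seteqP; split=> // y Sy; apply: empty; exists y.
apply: ge_sup; first by exists (f x), x.
move=> _ [y Sy <-]; rewrite -(ger0_norm (f_ge0 y)) -sqrtr_sqr ler_wsqrtr //.
exact: f_le.
Qed.

End SupImage.

Definition bounded_by (R : realType) (V : lmodType R[i]) (ip : V -> V -> R[i])
    (T : V -> V) (M : R) : Prop :=
  forall x, hnorm ip (T x) <= M * hnorm ip x.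

Section BoundedOperators.
Variables (R : realType) (V : lmodType R[i]) (ip : V -> V -> R[i]).
Hypothesis ip_inner : is_inner_product ip.
Implicit Types (S T : V -> V) (M N : R) (x : V).

Lemma bounded_by_comp S T M N : 0 <= M -> bounded_by ip S M -> bounded_by ip T N ->
  bounded_by ip (fun x => S (T x)) (M * N).
Proof. by move=> M0 hS hT x; apply: le_trans (hS _) _; rewrite -mulrA ler_wpM2l. Qed.

Lemma bounded_by_add S T M N : bounded_by ip S M -> bounded_by ip T N ->
  bounded_by ip (fun x => S x + T x) (M + N).
Proof. by move=> hS hT x; apply: le_trans (hnormD ip_inner _ _) _; rewrite mulrDl lerD. Qed.

Lemma unit_hnorm_le T M x : bounded_by ip T M -> hnorm ip x = 1 -> hnorm ip (T x) <= M.
Proof. by move=> hT x1; have := hT x; rewrite x1 mulr1. Qed.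

Lemma numrad_ge0 T : 0 <= numrad ip T.
Proof. by apply: sup_image_ge0 => x; exact: cabs_ge0. Qed.

Lemma opnorm_ge0 T : 0 <= opnorm ip T.
Proof. by apply: sup_image_ge0 => x; exact: hnorm_ge0. Qed.

(* [sup] of a set with no upper bound is 0, hence the boundedness hypotheses. *)
Lemma numrad_ub T M x : bounded_by ip T M -> hnorm ip x = 1 ->
  cabs (ip (T x) x) <= numrad ip T.
Proof.
move=> hT x1; apply: (sup_image_ub (f := fun y => cabs (ip (T y) y)) (B := M)) => // y y1.
apply: le_trans (cauchy_schwarz ip_inner _ _) _.
by rewrite y1 mulr1 (unit_hnorm_le hT).
Qed.

Lemma opnorm_ub T M x : bounded_by ip T M -> hnorm ip x = 1 ->
  hnorm ip (T x) <= opnorm ip T.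
Proof.
move=> hT x1; apply: (sup_image_ub (f := fun y => hnorm ip (T y)) (B := M)) => // y.
exact: unit_hnorm_le.
Qed.

End BoundedOperators.

Section Adjoint.
Variables (R : realType) (V : lmodType R[i]) (ip : V -> V -> R[i]).
Hypothesis ip_inner : is_inner_product ip.
Variables A As : V -> V.
Hypothesis adjA : is_adjoint ip A As.
Implicit Types (x y : V) (a b M : R).

Lemma ip_adjointl x y : ip (As x) y = ip x (A y).
Proof. by rewrite (ipC ip_inner y) -adjA -ipC. Qed.

Lemma ip_adjoint_self x : ip (As x) x = Num.conj (ip (A x) x).
Proof. by rewrite (ipC ip_inner x) adjA. Qed.

Lemma bounded_by_adjoint M : 0 <= M -> bounded_by ip A M -> bounded_by ip As M.
Proof.
move=> M0 hA y; have hv0 := hnorm_ge0 ip (As y).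
have sqr_le : hnorm ip (As y) ^+ 2 <= M * hnorm ip (As y) * hnorm ip y.
  rewrite -[_ ^+ 2]/(complex.Re ((_ ^+ 2)%:C)%C) -ipxx // -adjA.
  apply: le_trans (Re_le_cabs _) (le_trans (cauchy_schwarz ip_inner _ _) _).
  by rewrite ler_wpM2r ?hnorm_ge0.
have [->|v_neq0] := eqVneq (hnorm ip (As y)) 0; first by rewrite mulr_ge0 ?hnorm_ge0.
by rewrite expr2 mulrAC ler_pM2r ?lt_def ?v_neq0 in sqr_le.
Qed.

Lemma cabs_ip_comb_le a b x :
  cabs (ip ((a%:C)%C *: A x + (b%:C)%C *: As x) x) <= (`|a| + `|b|) * cabs (ip (A x) x).
Proof.
rewrite (ipDl ip_inner) !(ipZl ip_inner) ip_adjoint_self mulrDl.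
by apply: le_trans (cabsD _ _) _; rewrite !cabsM (cabs_conj (ip (A x) x)) !cabs_real.
Qed.

Lemma sqr_cabs_ip_le x : hnorm ip x = 1 ->
  cabs (ip (A x) x) ^+ 2 <= hnorm ip (A x) * hnorm ip (As x).
Proof.
move=> x1; rewrite expr2; apply: ler_pM; rewrite ?cabs_ge0 //.
  by apply: le_trans (cauchy_schwarz ip_inner _ _) _; rewrite x1 mulr1.
by rewrite adjA; apply: le_trans (cauchy_schwarz ip_inner _ _) _; rewrite x1 mul1r.
Qed.

Lemma buzano_adjoint x : hnorm ip x = 1 ->
  2 * cabs (ip (A x) x) ^+ 2 <= cabs (ip (A (A x)) x) + hnorm ip (A x) * hnorm ip (As x).
Proof.
move=> x1; have := buzano ip_inner (A x) (As x) x1.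
by rewrite -adjA -(adjA (A x)) cabsM expr2.
Qed.

Lemma hnorm_sqr_sum x : hnorm ip (A x) ^+ 2 + hnorm ip (As x) ^+ 2 =
  complex.Re (ip (As (A x) + A (As x)) x).
Proof. by rewrite (ipDl ip_inner) ip_adjointl (adjA (As x)) !(ipxx ip_inner). Qed.

Lemma hnormM_le_opnorm M x : 0 <= M -> bounded_by ip A M -> hnorm ip x = 1 ->
  2 * (hnorm ip (A x) * hnorm ip (As x)) <= opnorm ip (fun y => As (A y) + A (As y)).
Proof.
move=> M0 hA x1; have hAs := bounded_by_adjoint M0 hA.
have am_gm : 2 * (hnorm ip (A x) * hnorm ip (As x)) <=
    hnorm ip (A x) ^+ 2 + hnorm ip (As x) ^+ 2.
  by have := sqr_ge0 (hnorm ip (A x) - hnorm ip (As x)); rewrite sqrrB; lra.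
apply: le_trans am_gm _; rewrite hnorm_sqr_sum.
apply: le_trans (Re_le_cabs _) (le_trans (cauchy_schwarz ip_inner _ _) _).
rewrite x1 mulr1; apply: (opnorm_ub (M := M * M + M * M)) x1.
by apply: bounded_by_add => //; apply: bounded_by_comp.
Qed.

Lemma cabs_ip_comb_sqr_le M a b x : 0 <= M -> bounded_by ip A M -> hnorm ip x = 1 ->
  cabs (ip ((a%:C)%C *: A x + (b%:C)%C *: As x) x) ^+ 2 <=
    `|a| ^+ 2 * numrad ip A ^+ 2 + `|a * b| * numrad ip (fun y => A (A y))
    + (`|a| + `|b|) / 2 * `|b| * opnorm ip (fun y => As (A y) + A (As y)).
Proof.
move=> M0 hA x1.
set s := cabs (ip (A x) x); set uv := hnorm ip (A x) * hnorm ip (As x).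
set W := numrad ip A; set W2 := numrad ip _; set N := opnorm ip _.
have s_ge0 : 0 <= s := cabs_ge0 _.
have s_le_W : s <= W := numrad_ub ip_inner hA x1.
have s2_le_W2 : 2 * s ^+ 2 <= W2 + uv.
  apply: le_trans (buzano_adjoint x1) _; rewrite lerD2r.
  exact: (numrad_ub ip_inner (bounded_by_comp M0 hA hA) x1).
have s2_le_uv : s ^+ 2 <= uv := sqr_cabs_ip_le x1.
have uv_le_N : 2 * uv <= N := hnormM_le_opnorm M0 hA x1.
apply: le_trans (_ : ((`|a| + `|b|) * s) ^+ 2 <= _).
  by rewrite ler_pXn2r ?nnegrE ?cabs_ge0 ?mulr_ge0 ?addr_ge0 //; exact: cabs_ip_comb_le.
rewrite normrM; set α := `|a|; set β := `|b|.
have α_ge0 : 0 <= α := normr_ge0 a; have β_ge0 : 0 <= β := normr_ge0 b.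
have h1 : α ^+ 2 * s ^+ 2 <= α ^+ 2 * W ^+ 2.
  by rewrite ler_wpM2l ?sqr_ge0 ?ler_pXn2r ?nnegrE // (le_trans s_ge0).
have h2 : α * β * (2 * s ^+ 2) <= α * β * (W2 + uv) by rewrite ler_wpM2l ?mulr_ge0.
have h3 : β ^+ 2 * s ^+ 2 <= β ^+ 2 * uv by rewrite ler_wpM2l ?sqr_ge0.
have h4 : (α + β) * β * (2 * uv) <= (α + β) * β * N.
  by rewrite ler_wpM2l ?mulr_ge0 ?addr_ge0.
lra.
Qed.

End Adjoint.

Unset Implicit Arguments.
Set Strict Implicit.

Theorem theorem3p7 (R : realType) (V : lmodType R[i]) (ip : V -> V -> R[i])
  (hH : is_hilbert ip) (phi psi : R -> R)
  (hphi : {within `[0, 1]%classic, continuous phi}) (hpsi : {within `[0, 1]%classic, continuous psi})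
  (A As : V -> V) (hA : is_bounded_op ip A) (hAs : is_adjoint ip A As)
  (t : R) (ht : t \in `[0, 1]) :
  numrad_t ip phi psi A As t ^+ 2 <=
    `|phi t| ^+ 2 * numrad ip A ^+ 2
    + `|phi t * psi t| * numrad ip (fun x => A (A x))
    + (`|phi t| + `|psi t|) / 2 * `|psi t|
        * opnorm ip (fun x => As (A x) + A (As x)).
Proof.
have [ip_inner _] := hH; have [_ [M hM]] := hA.
have A_bounded : bounded_by ip A `|M|.
  by move=> x; apply: le_trans (hM x) _; rewrite ler_wpM2r ?hnorm_ge0 ?ler_norm.
apply: sup_image_sqr_le => [||x].
- by rewrite !addr_ge0 ?mulr_ge0 ?invr_ge0 ?addr_ge0 ?numrad_ge0 ?opnorm_ge0 ?sqr_ge0.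
- by move=> x; exact: cabs_ge0.
- exact: (cabs_ip_comb_sqr_le ip_inner hAs _ _ (normr_ge0 M) A_bounded).
Qed.
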